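(* Let $\alpha\in\mathbb{R}$, let $p$ be a positive integer, $b\in\mathbb{R}$, and let $f$ be defined only on ${}_{b}\mathbb{N}$. Then for all $t\in{}_{b-2p+1}\mathbb{N}$, $${}_{b-p+1}\nabla^{-\alpha}\,{}_{\ominus}\Delta^p f(t)={}_{\ominus}\Delta^p\,{}_{b-p+1}\nabla^{-\alpha}f(t)-\sum_{k=0}^{p-1}\frac{(b-p+1-t)^{\overline{\alpha-p+k}}}{\Gamma(\alpha+k-p+1)}\,{}_{\ominus}\Delta^k f(b-p+1).$$
   Context: Notation: ${}_{c}\mathbb{N}=\{c,c-1,\dots\}$, $\rho(t)=t-1$, $\Delta g(t)=g(t+1)-g(t)$, ${}_{\ominus}\Delta^m g=(-1)^m\Delta^m g$. Rising factorial: $t^{\overline{\beta}}=\Gamma(t+\beta)/\Gamma(t)$ with $0^{\overline{\beta}}=0$; the reciprocal of $\Gamma$ at a pole is $0$. For $\gamma>0$ and endpoint $c$, the nabla right fractional sum is ${}_{c}\nabla^{-\gamma}g(t)=\frac{1}{\Gamma(\gamma)}\sum_{s=t}^{c-1}(s-\rho(t))^{\overline{\gamma-1}}g(s)$, a sum with upper limit smaller than lower limit being $0$. For $\beta>0$ let $n=[\beta]+1$ with $[\beta]$ the greatest integer strictly less than $\beta$; the nabla right fractional difference is ${}_{c}\nabla^{\beta}g(t)=(-1)^n\Delta^n\,{}_{c}\nabla^{-(n-\beta)}g(t)$ (order-$0$ operator = identity). For $\alpha<0$, ${}_{c}\nabla^{-\alpha}$ denotes the nabla right fractional difference of order $-\alpha$;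 for $\alpha=0$ the identity. *)

From Stdlib Require Import Reals Factorial ClassicalEpsilon.
Open Scope R_scope.

(** Gauss' product for the reciprocal Gamma function:
    1/Gamma(x) = lim_{N->oo} x(x+1)...(x+N) / (N! N^x).
    This limit exists for every real x and vanishes exactly at the poles
    0,-1,-2,... of Gamma. *)
Definition inv_gamma_seq (x : R) (n : nat) : R :=
  prod_f_R0 (fun i => x + INR i) (S n) / (INR (fact (S n)) * Rpower (INR (S n)) x).

Definition RGammaInv (x : R) : R :=
  epsilon (inhabits 0) (fun l => Un_cv (inv_gamma_seq x) l).

(** Gamma := 1 / (1/Gamma).  At a pole RGammaInv x = 0, so Gamma x = /0;
    since [/ 0 = 0] in Stdlib ([Rinv_0]), we get 1/Gamma = 0 at a pole,
    which is the paper's convention. *)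
Definition Gamma (x : R) : R := / RGammaInv x.

Definition rising (t beta : R) : R :=
  if Req_dec_T t 0 then 0 else Gamma (t + beta) / Gamma t.

Fixpoint rsum (n : nat) (F : nat -> R) : R :=
  match n with
  | O => 0
  | S m => rsum m F + F m
  end.

Definition Delta (g : R -> R) : R -> R := fun t => g (t + 1) - g t.
Fixpoint DeltaN (m : nat) (g : R -> R) : R -> R :=
  match m with
  | O => g
  | S k => Delta (DeltaN k g)
  end.
Definition oDelta (m : nat) (g : R -> R) : R -> R :=
  fun t => (-1) ^ m * DeltaN m g t.

(** The set  _c N = {c, c-1, c-2, ...}. *)
Definition inN (c t : R) : Prop := exists n : nat, t = c - INR n.

(** Nabla right fractional sum of order gamma > 0 with endpoint c:
    (1/Gamma(gamma)) sum_{s=t}^{c-1} (s - rho(t))^{(gamma-1)} g(s),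
    where s runs over t, t+1, ..., c-1 (empty if c-1 < t).  The number of
    terms is floor(c - t) = up(c - t) - 1 (equal to c - t when c - t is an
    integer, which is the case on the lattice). *)
Definition nabla_sum (c gamma : R) (g : R -> R) : R -> R :=
  fun t =>
    / Gamma gamma *
    rsum (Z.to_nat (up (c - t) - 1))
      (fun j => rising ((t + INR j) - (t - 1)) (gamma - 1) * g (t + INR j)).

(** [beta] = greatest integer strictly less than beta  (= -up(-beta)). *)
Definition gis (beta : R) : Z := (- up (- beta))%Z.

Definition nabla_diff (c beta : R) (g : R -> R) : R -> R :=
  let n := Z.to_nat (gis beta + 1) in
  fun t =>
    (-1) ^ n *
    DeltaN n (if Req_dec_T (INR n - beta) 0 then g
              else nabla_sum c (INR n - beta) g) t.

Definition nabla_op (c alpha : R) (g : R -> R) : R -> R :=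
  if Rlt_dec 0 alpha then nabla_sum c alpha g
  else if Req_dec_T alpha 0 then g
  else nabla_diff c (- alpha) g.

From Stdlib Require Import Reals Lra Lia ZArith ClassicalEpsilon FunctionalExtensionality.
Open Scope R_scope.

(** Points t = c - z of the lattice are indexed by their distance z to the endpoint c.
    In that variable the ominus difference becomes the backward difference, and the
    fractional sum of order g > 0 becomes a convolution with the generalized binomials
    rbinom g j = g(g+1)...(g+j-1)/j!.  Summation by parts shows that differencing such
    a sum differences the summand at the price of one boundary term carrying the
    endpoint value; iterating gives the commutation formula with p boundary terms.
    Every operator _c nabla^{-alpha} is, on the lattice, either n differences
    (alpha = -n) or n differences of a fractional sum of order g (alpha = g - n), and
    in both cases the boundary weights are those of the theorem. *)

Lemma nat_above (r : R) : exists n : nat, r < INR n.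
Proof. destruct (INR_archimed 1 r) as [n Hn]; [lra|]. exists n; lra. Qed.

Lemma cv_const (c : R) : Un_cv (fun _ => c) c.
Proof. intros e He. exists O. intros n _. unfold Rdist. rewrite Rminus_diag, Rabs_R0; lra. Qed.

Lemma cv_eventually_ext (u v : nat -> R) (l : R) (N : nat) :
  (forall n, (N <= n)%nat -> u n = v n) -> Un_cv u l -> Un_cv v l.
Proof.
  intros Huv Hu e He. destruct (Hu e He) as [M HM]. exists (max N M). intros n Hn.
  rewrite <- Huv by lia. apply HM; lia.
Qed.

Lemma cv_affine_ratio (a b : R) : Un_cv (fun n => (INR n + a) / (INR n + b)) 1.
Proof.
  assert (Hinv : Un_cv (fun n => / (INR n + b)) 0).
  { apply cv_infty_cv_0. intros M. destruct (nat_above (M - b)) as [N HN].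
    exists N. intros n Hn. apply le_INR in Hn. lra. }
  destruct (nat_above (- b)) as [N HN].
  apply (cv_eventually_ext (fun n => 1 + (a - b) * / (INR n + b)) _ _ N).
  - intros n Hn. apply le_INR in Hn. field. lra.
  - assert (H := CV_plus _ _ _ _ (cv_const 1) (CV_mult _ _ _ _ (cv_const (a - b)) Hinv)).
    rewrite Rmult_0_r, Rplus_0_r in H. exact H.
Qed.

Lemma unit_step_ind_pos (P : R -> Prop) :
  (forall y, 0 < y <= 1 -> P y) -> (forall y, 0 < y -> P y -> P (y + 1)) ->
  forall x, 0 < x -> P x.
Proof.
  intros Hbase Hstep x Hx. destruct (nat_above x) as [k Hk].
  revert x Hx Hk. induction k as [|k IH]; intros x Hx Hk; [simpl in Hk; lra|].
  destruct (Rle_dec x 1) as [Hle|Hgt]; [apply Hbase; lra|].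
  replace x with ((x - 1) + 1) by ring. apply Hstep; [lra|].
  apply IH; [lra|]. rewrite S_INR in Hk. lra.
Qed.

Lemma unit_step_ind_all (P : R -> Prop) :
  (forall y, 0 < y -> P y) -> (forall y, P (y + 1) -> P y) -> forall x, P x.
Proof.
  intros Hbase Hstep x. destruct (nat_above (- x)) as [k Hk].
  revert x Hk. induction k as [|k IH]; intros x Hk; [apply Hbase; simpl in Hk; lra|].
  apply Hstep, IH. rewrite S_INR in Hk. lra.
Qed.

(** Bernoulli's inequality a^x <= 1 + x (a - 1) for exponents 0 <= x <= 1,
    i.e. concavity of a |-> a^x, from the tangent bound 1 + u <= e^u. *)
Lemma Rpower_bernoulli (a x : R) : 0 < a -> 0 <= x <= 1 -> Rpower a x <= 1 + x * (a - 1).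
Proof.
  intros Ha Hx. unfold Rpower.
  set (L := ln a). set (E := exp (x * L)).
  assert (HE : 0 < E) by apply exp_pos.
  assert (Ha_split : a = E * exp (L - x * L)) by (unfold E, L; rewrite <- exp_plus, <- (exp_ln a) at 1 by lra; f_equal; ring).
  assert (H1_split : 1 = E * exp (- (x * L))) by (unfold E; rewrite <- exp_plus, <- exp_0; f_equal; ring).
  pose proof (exp_ineq1_le (L - x * L)) as Htangent1. pose proof (exp_ineq1_le (- (x * L))) as Htangent2.
  assert (x * E * (1 + (L - x * L)) <= x * E * exp (L - x * L)) by (apply Rmult_le_compat_l; nra).
  assert ((1 - x) * E * (1 + - (x * L)) <= (1 - x) * E * exp (- (x * L))) by (apply Rmult_le_compat_l; nra).
  fold E. nra.
Qed.

Lemma prod_f_R0_succ (f : nat -> R) (m : nat) : prod_f_R0 f (S m) = prod_f_R0 f m * f (S m).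
Proof. reflexivity. Qed.

Lemma prod_shift (x : R) (m : nat) :
  prod_f_R0 (fun i => x + 1 + INR i) m * x = prod_f_R0 (fun i => x + INR i) m * (x + INR m + 1).
Proof.
  induction m as [|m IH]; [simpl; ring|].
  rewrite !prod_f_R0_succ. rewrite S_INR.
  transitivity (prod_f_R0 (fun i => x + 1 + INR i) m * x * (x + 1 + (INR m + 1))); [ring|].
  rewrite IH. ring.
Qed.

Lemma prod_pos (x : R) (m : nat) : 0 < x -> 0 < prod_f_R0 (fun i => x + INR i) m.
Proof.
  intros Hx. induction m as [|m IH]; [simpl; lra|].
  rewrite !prod_f_R0_succ.
  apply Rmult_lt_0_compat; auto. pose proof (pos_INR (S m)). lra.
Qed.

Lemma Rpower_pos (a x : R) : 0 < Rpower a x.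
Proof. apply exp_pos. Qed.

Lemma fact_pos (n : nat) : 0 < INR (fact n).
Proof. apply lt_0_INR, lt_O_fact. Qed.

Lemma fact_succ (n : nat) : INR (fact (S n)) = INR (S n) * INR (fact n).
Proof. apply mult_INR. Qed.

(** The Gauss sequence satisfies the discrete form of 1/Gamma(x) = x/Gamma(x+1). *)
Lemma inv_gamma_seq_shift (x : R) (n : nat) :
  inv_gamma_seq (x + 1) n * (x * (INR n + 1)) = inv_gamma_seq x n * (x + INR n + 2).
Proof.
  unfold inv_gamma_seq.
  assert (Hn : 0 < INR (S n)) by (apply lt_0_INR; lia).
  rewrite Rpower_plus, Rpower_1 by exact Hn.
  pose proof (prod_shift x (S n)) as Hprod. rewrite S_INR in Hn, Hprod |- *.
  pose proof (Rpower_pos (INR n + 1) x). pose proof (fact_pos (S n)).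
  transitivity (prod_f_R0 (fun i => x + 1 + INR i) (S n) * x / (INR (fact (S n)) * Rpower (INR n + 1) x));
    [field; repeat split; lra|].
  rewrite Hprod. field. split; lra.
Qed.

Lemma inv_gamma_seq_cv_down (x l : R) :
  Un_cv (inv_gamma_seq (x + 1)) l -> Un_cv (inv_gamma_seq x) (x * l).
Proof.
  intros Hl. destruct (nat_above (- x - 2)) as [N HN].
  apply (cv_eventually_ext (fun n => inv_gamma_seq (x + 1) n * x * ((INR n + 1) / (INR n + (x + 2)))) _ _ N).
  - intros n Hn. apply le_INR in Hn. pose proof (inv_gamma_seq_shift x n) as Hs.
    apply (Rmult_eq_reg_r (INR n + (x + 2))); [|lra].
    transitivity (inv_gamma_seq (x + 1) n * (x * (INR n + 1))); [field; lra|].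
    rewrite Hs. ring.
  - replace (x * l) with (l * x * 1) by ring.
    apply CV_mult; [apply CV_mult; [exact Hl | apply cv_const] | apply cv_affine_ratio].
Qed.

Lemma inv_gamma_seq_cv_up (x l : R) :
  x <> 0 -> Un_cv (inv_gamma_seq x) l -> Un_cv (inv_gamma_seq (x + 1)) (l / x).
Proof.
  intros Hx Hl.
  apply (cv_eventually_ext (fun n => inv_gamma_seq x n * / x * ((INR n + (x + 2)) / (INR n + 1))) _ _ 0).
  - intros n _. pose proof (pos_INR n). pose proof (inv_gamma_seq_shift x n) as Hs.
    apply (Rmult_eq_reg_r (x * (INR n + 1))); [|apply Rmult_integral_contrapositive; split; lra].
    rewrite Hs. field. split; lra.
  - replace (l / x) with (l * / x * 1) by (field; exact Hx).
    apply CV_mult; [apply CV_mult; [exact Hl | apply cv_const] | apply cv_affine_ratio].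
Qed.

(** Two consequences of Bernoulli's inequality comparing (A+1)^x with A^x; they drive
    the monotonicity of the Gauss sequence and of its lower bound below. *)
Lemma bernoulli_pred (A x : R) : 0 < A -> 0 <= x <= 1 ->
  (x + (A + 1)) * Rpower A x <= (A + 1) * Rpower (A + 1) x.
Proof.
  intros HA Hx. set (B := A + 1).
  assert (Hsplit : Rpower A x = Rpower (A / B) x * Rpower B x).
  { unfold B. rewrite Rpower_mult_distr by (try apply Rdiv_lt_0_compat; lra). f_equal. field. lra. }
  pose proof (Rpower_bernoulli (A / B) x ltac:(unfold B; apply Rdiv_lt_0_compat; lra) Hx) as Hb.
  replace (1 + x * (A / B - 1)) with ((B - x) / B) in Hb by (unfold B; field; lra).
  pose proof (Rpower_pos B x). rewrite Hsplit.
  apply Rle_trans with ((x + B) * ((B - x) / B) * Rpower B x).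
  - rewrite Rmult_assoc. apply Rmult_le_compat_l; [unfold B; lra|]. apply Rmult_le_compat_r; lra.
  - apply Rmult_le_compat_r; [lra|].
    replace ((x + B) * ((B - x) / B)) with (B - x * x / B) by (unfold B; field; lra).
    assert (0 <= x * x / B) by (unfold Rdiv; apply Rmult_le_pos; [nra | left; apply Rinv_0_lt_compat; unfold B; lra]). lra.
Qed.

(** The companion inequality, from ((B+1)/B)^x <= 1 + x/B. *)
Lemma bernoulli_succ (B x : R) : 0 < B -> 0 <= x <= 1 ->
  B * Rpower (B + 1) x <= (x + B) * Rpower B x.
Proof.
  intros HB Hx.
  assert (Hsplit : Rpower (B + 1) x = Rpower ((B + 1) / B) x * Rpower B x).
  { rewrite Rpower_mult_distr by (try apply Rdiv_lt_0_compat; lra). f_equal. field. lra. }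
  pose proof (Rpower_bernoulli ((B + 1) / B) x ltac:(apply Rdiv_lt_0_compat; lra) Hx) as Hb.
  replace (1 + x * ((B + 1) / B - 1)) with ((x + B) / B) in Hb by (field; lra).
  pose proof (Rpower_pos B x). rewrite Hsplit, <- Rmult_assoc.
  apply Rmult_le_compat_r; [lra|].
  apply Rle_trans with (B * ((x + B) / B)); [apply Rmult_le_compat_l; lra|].
  right. field. lra.
Qed.

Lemma Rdiv_le_cross (p q r s : R) : 0 < q -> 0 < s -> p * s <= r * q -> p / q <= r / s.
Proof.
  intros Hq Hs H. unfold Rdiv. apply (Rmult_le_reg_r (q * s)); [nra|].
  replace (p * / q * (q * s)) with (p * s) by (field; lra).
  replace (r * / s * (q * s)) with (r * q) by (field; lra). exact H.
Qed.

(** For 0 < x <= 1 the Gauss sequence is nonincreasing ... *)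
Lemma inv_gamma_seq_decreasing (x : R) : 0 < x <= 1 -> Un_decreasing (inv_gamma_seq x).
Proof.
  intros Hx n. unfold inv_gamma_seq.
  rewrite (prod_f_R0_succ _ (S n)), (fact_succ (S n)), (S_INR (S n)).
  set (P := prod_f_R0 (fun i => x + INR i) (S n)). set (F := INR (fact (S n))). set (A := INR (S n)).
  assert (HA : 0 < A) by (apply lt_0_INR; lia).
  assert (HP : 0 < P) by (apply prod_pos; lra).
  pose proof (fact_pos (S n)) as HF. fold F in HF.
  pose proof (Rpower_pos A x). pose proof (Rpower_pos (A + 1) x).
  pose proof (bernoulli_pred A x HA ltac:(lra)) as Hb.
  apply Rdiv_le_cross; try (repeat apply Rmult_lt_0_compat; lra).
  replace (P * (x + (A + 1)) * (F * Rpower A x)) with (P * F * ((x + (A + 1)) * Rpower A x)) by ring.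
  replace (P * ((A + 1) * F * Rpower (A + 1) x)) with (P * F * ((A + 1) * Rpower (A + 1) x)) by ring.
  apply Rmult_le_compat_l; [nra | exact Hb].
Qed.

(** ... and bounded below by the sequence obtained by replacing (n+1)^x with (n+2)^x,
    which is nondecreasing and positive. *)
Definition gauss_lower (x : R) (n : nat) : R :=
  prod_f_R0 (fun i => x + INR i) (S n) / (INR (fact (S n)) * Rpower (INR (S (S n))) x).

Lemma gauss_lower_pos (x : R) (n : nat) : 0 < x -> 0 < gauss_lower x n.
Proof.
  intros Hx. apply Rdiv_lt_0_compat; [apply prod_pos; exact Hx|].
  apply Rmult_lt_0_compat; [apply fact_pos | apply Rpower_pos].
Qed.

(** The lower bound holds since (n+1)^x <= (n+2)^x. *)
Lemma gauss_lower_le (x : R) (n : nat) : 0 < x -> gauss_lower x n <= inv_gamma_seq x n.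
Proof.
  intros Hx. unfold gauss_lower, inv_gamma_seq.
  pose proof (prod_pos x (S n) Hx). pose proof (fact_pos (S n)).
  assert (Hle : Rpower (INR (S n)) x <= Rpower (INR (S (S n))) x).
  { apply Rle_Rpower_l; [lra|]. split; [apply lt_0_INR; lia | apply le_INR; lia]. }
  unfold Rdiv. apply Rmult_le_compat_l; [lra|]. apply Rinv_le_contravar.
  - apply Rmult_lt_0_compat; [lra | apply Rpower_pos].
  - apply Rmult_le_compat_l; lra.
Qed.

Lemma gauss_lower_growing (x : R) : 0 < x <= 1 -> Un_growing (gauss_lower x).
Proof.
  intros Hx n. unfold gauss_lower.
  rewrite (prod_f_R0_succ _ (S n)), (fact_succ (S n)), (S_INR (S (S n))).
  set (P := prod_f_R0 (fun i => x + INR i) (S n)). set (F := INR (fact (S n))). set (B := INR (S (S n))).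
  assert (HB : 0 < B) by (apply lt_0_INR; lia).
  assert (HP : 0 < P) by (apply prod_pos; lra).
  pose proof (fact_pos (S n)) as HF. fold F in HF.
  pose proof (Rpower_pos B x). pose proof (Rpower_pos (B + 1) x).
  pose proof (bernoulli_succ B x HB ltac:(lra)) as Hb.
  apply Rdiv_le_cross; try (repeat apply Rmult_lt_0_compat; lra).
  replace (P * (B * F * Rpower (B + 1) x)) with (P * F * (B * Rpower (B + 1) x)) by ring.
  replace (P * (x + B) * (F * Rpower B x)) with (P * F * ((x + B) * Rpower B x)) by ring.
  apply Rmult_le_compat_l; [nra | exact Hb].
Qed.

Lemma inv_gamma_seq_cv_unit (x : R) : 0 < x <= 1 -> exists l, Un_cv (inv_gamma_seq x) l /\ 0 < l.
Proof.
  intros Hx.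
  assert (Hbelow : forall n, gauss_lower x 0 <= inv_gamma_seq x n).
  { intros n. apply Rle_trans with (gauss_lower x n); [|apply gauss_lower_le; lra].
    apply Rge_le, growing_prop; [apply gauss_lower_growing; exact Hx | lia]. }
  pose proof (gauss_lower_pos x 0 ltac:(lra)) as Hpos.
  destruct (decreasing_cv _ (inv_gamma_seq_decreasing x Hx)) as [l Hl].
  - exists 0. intros r [i ->]. unfold opp_seq. pose proof (Hbelow i). lra.
  - exists l. split; [exact Hl|].
    pose proof (Rle_cv_lim Hbelow (cv_const _) Hl). lra.
Qed.

Lemma inv_gamma_seq_cv (x : R) : exists l, Un_cv (inv_gamma_seq x) l.
Proof.
  revert x. apply unit_step_ind_all.
  - apply unit_step_ind_pos.
    + intros y Hy. destruct (inv_gamma_seq_cv_unit y Hy) as [l [Hl _]]. eauto.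
    + intros y Hy [l Hl]. exists (l / y). apply inv_gamma_seq_cv_up; [lra | exact Hl].
  - intros y [l Hl]. exists (y * l). apply inv_gamma_seq_cv_down, Hl.
Qed.

Lemma RGammaInv_spec (x : R) : Un_cv (inv_gamma_seq x) (RGammaInv x).
Proof. unfold RGammaInv. apply epsilon_spec, inv_gamma_seq_cv. Qed.

Lemma RGammaInv_rec (x : R) : RGammaInv x = x * RGammaInv (x + 1).
Proof. exact (UL_sequence _ _ _ (RGammaInv_spec x) (inv_gamma_seq_cv_down _ _ (RGammaInv_spec (x + 1)))). Qed.

(** 1/Gamma is positive on (0,+oo): positive limits on (0,1], then the functional equation. *)
Lemma RGammaInv_pos (x : R) : 0 < x -> 0 < RGammaInv x.
Proof.
  revert x. apply (unit_step_ind_pos (fun y => 0 < RGammaInv y)).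
  - intros y Hy. destruct (inv_gamma_seq_cv_unit y Hy) as [l [Hl Hl0]].
    rewrite (UL_sequence _ _ _ (RGammaInv_spec y) Hl). exact Hl0.
  - intros y Hy Hpos. rewrite RGammaInv_rec in Hpos. nra.
Qed.

(** 1/Gamma(1) = 1, the Gauss sequence at 1 being (n+2)/(n+1). *)
Lemma RGammaInv_1 : RGammaInv 1 = 1.
Proof.
  assert (Hprod : forall m, prod_f_R0 (fun i => 1 + INR i) m = INR (fact (S m))).
  { induction m as [|m IH]; [simpl; lra|].
    rewrite prod_f_R0_succ, IH, (fact_succ (S m)), (S_INR (S m)). ring. }
  apply (UL_sequence _ _ _ (RGammaInv_spec 1)).
  apply (cv_eventually_ext (fun n => (INR n + 2) / (INR n + 1)) _ _ 0); [|apply cv_affine_ratio].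
  intros n _. unfold inv_gamma_seq. pose proof (fact_pos (S n)). pose proof (pos_INR n).
  rewrite Hprod, Rpower_1 by (apply lt_0_INR; lia).
  rewrite (fact_succ (S n)), !S_INR. field. lra.
Qed.

Lemma RGammaInv_neg_int (m : nat) : RGammaInv (- INR m) = 0.
Proof.
  induction m as [|m IH]; rewrite RGammaInv_rec; [simpl; ring|].
  rewrite S_INR. replace (- (INR m + 1) + 1) with (- INR m) by ring. rewrite IH. ring.
Qed.

Lemma RGammaInv_neq0 (x : R) : (forall m : nat, x <> - INR m) -> RGammaInv x <> 0.
Proof.
  revert x. apply (unit_step_ind_all (fun y => (forall m : nat, y <> - INR m) -> RGammaInv y <> 0)).
  - intros y Hy _. pose proof (RGammaInv_pos y Hy). lra.
  - intros y IH Hy. rewrite RGammaInv_rec.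
    apply Rmult_integral_contrapositive_currified.
    + intros Hy0. apply (Hy 0%nat). simpl. lra.
    + apply IH. intros m Hm. apply (Hy (S m)). rewrite S_INR. lra.
Qed.

(** The generalized binomial coefficient b(b+1)...(b+j-1)/j!; it is the weight of
    g(t+j) in the nabla fractional sum of order b taken at t. *)
Fixpoint rbinom (b : R) (j : nat) : R :=
  match j with
  | O => 1
  | S i => rbinom b i * (b + INR i) / INR (S i)
  end.

Lemma rbinom_succ (b : R) (j : nat) : rbinom b (S j) = rbinom b j * (b + INR j) / INR (S j).
Proof. reflexivity. Qed.

Lemma rbinom_1 (j : nat) : rbinom 1 j = 1.
Proof.
  induction j as [|j IH]; [reflexivity|].
  rewrite rbinom_succ, IH, S_INR. pose proof (pos_INR j). field. lra.
Qed.

Lemma RGammaInv_rbinom (b : R) (j : nat) :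
  RGammaInv b = rbinom b j * INR (fact j) * RGammaInv (b + INR j).
Proof.
  induction j as [|j IH]; [simpl; rewrite Rplus_0_r; ring|].
  rewrite IH, (RGammaInv_rec (b + INR j)), rbinom_succ, fact_succ.
  pose proof (pos_INR j). rewrite !S_INR. replace (b + (INR j + 1)) with (b + INR j + 1) by ring.
  field. lra.
Qed.

Lemma RGammaInv_fact (j : nat) : RGammaInv (INR j + 1) * INR (fact j) = 1.
Proof. pose proof (RGammaInv_rbinom 1 j) as H. rewrite RGammaInv_1, rbinom_1 in H. rewrite Rplus_comm. lra. Qed.

Lemma rising_rbinom (b : R) (j : nat) :
  RGammaInv (b + INR j) <> 0 -> rising (INR j + 1) (b - 1) * RGammaInv b = rbinom b j.
Proof.
  intros Hnz. unfold rising, Gamma. pose proof (pos_INR j).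
  destruct (Req_dec_T (INR j + 1) 0) as [e|_]; [lra|].
  replace (INR j + 1 + (b - 1)) with (b + INR j) by ring.
  rewrite (RGammaInv_rbinom b j). pose proof (RGammaInv_fact j) as Hf.
  unfold Rdiv. rewrite Rinv_inv.
  transitivity (rbinom b j * (RGammaInv (INR j + 1) * INR (fact j))); [field; exact Hnz|].
  rewrite Hf. ring.
Qed.

Lemma rbinom_pascal (b : R) (j : nat) : rbinom b (S j) - rbinom b j = rbinom (b - 1) (S j).
Proof.
  assert (Hpred : forall i, rbinom (b - 1) (S i) = rbinom b i * (b - 1) / INR (S i)).
  { induction i as [|i IH]; [simpl; field|].
    rewrite rbinom_succ, IH, rbinom_succ, !S_INR. pose proof (pos_INR i). field. lra. }
  rewrite Hpred, rbinom_succ, S_INR. pose proof (pos_INR j). field. lra.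
Qed.

Lemma rsum_succ (n : nat) (F : nat -> R) : rsum (S n) F = rsum n F + F n.
Proof. reflexivity. Qed.

Lemma rsum_ext (n : nat) (F G : nat -> R) :
  (forall k, (k < n)%nat -> F k = G k) -> rsum n F = rsum n G.
Proof.
  induction n as [|n IH]; intros H; [reflexivity|].
  rewrite !rsum_succ, IH by (intros; apply H; lia). rewrite H by lia. reflexivity.
Qed.

Lemma rsum_minus (n : nat) (F G : nat -> R) : rsum n (fun k => F k - G k) = rsum n F - rsum n G.
Proof. induction n as [|n IH]; simpl; [ring|]. rewrite IH. ring. Qed.

Lemma rsum_scal (n : nat) (a : R) (F : nat -> R) : rsum n (fun k => a * F k) = a * rsum n F.
Proof. induction n as [|n IH]; simpl; [ring|]. rewrite IH. ring. Qed.

Lemma rsum_split (p n : nat) (F : nat -> R) :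
  rsum (p + n) F = rsum p F + rsum n (fun k => F (p + k)%nat).
Proof.
  induction n as [|n IH]; [simpl; rewrite Nat.add_0_r; ring|].
  rewrite Nat.add_succ_r, !rsum_succ, IH. ring.
Qed.

Lemma rsum_zero (n : nat) (F : nat -> R) : (forall k, (k < n)%nat -> F k = 0) -> rsum n F = 0.
Proof.
  intros H. rewrite (rsum_ext n F (fun _ => 0 * 0)) by (intros; rewrite H; [ring | assumption]).
  rewrite rsum_scal. ring.
Qed.

(** A function on the lattice c, c-1, c-2, ... is a sequence indexed by the distance
    z = c - t to the endpoint.  The forward difference in t becomes minus the backward
    difference [zdiff] in z. *)
Definition zdiff (s : Z -> R) : Z -> R := fun z => s z - s (z - 1)%Z.

Fixpoint zdiffN (m : nat) (s : Z -> R) : Z -> R :=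
  match m with
  | O => s
  | S k => zdiff (zdiffN k s)
  end.

Lemma zdiffN_add (p n : nat) (s : Z -> R) : zdiffN p (zdiffN n s) = zdiffN (p + n) s.
Proof. induction p as [|p IH]; simpl; [reflexivity|]. rewrite IH. reflexivity. Qed.

(** The nabla right fractional sum of order g, in the distance variable: the z terms
    between t and the endpoint, weighted by the generalized binomials. *)
Definition zsum (g : R) (s : Z -> R) : Z -> R :=
  fun z => rsum (Z.to_nat z) (fun j => rbinom g j * s (z - Z.of_nat j)%Z).

Definition rbinomZ (b : R) (z : Z) : R := if Z_lt_dec z 0 then 0 else rbinom b (Z.to_nat z).

Lemma rbinomZ_pascal (b : R) (w : Z) : rbinomZ b w - rbinomZ b (w - 1) = rbinomZ (b - 1) w.
Proof.
  unfold rbinomZ. destruct (Z_lt_dec w 0); destruct (Z_lt_dec (w - 1) 0); try lia.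
  - ring.
  - replace w with 0%Z by lia. simpl. ring.
  - replace (Z.to_nat w) with (S (Z.to_nat (w - 1))) by lia. apply rbinom_pascal.
Qed.

(** Summation by parts: differencing a fractional sum differences the summand and
    leaves one boundary term coming from the endpoint value s 0. *)
Lemma zdiff_zsum (g : R) (s : Z -> R) (z : Z) :
  zdiff (zsum g s) z = zsum g (zdiff s) z + rbinomZ g (z - 1) * s 0%Z.
Proof.
  unfold zdiff, zsum, rbinomZ. destruct (Z_lt_dec (z - 1) 0) as [Hz|Hz].
  - replace (Z.to_nat z) with O by lia. replace (Z.to_nat (z - 1)) with O by lia. simpl. ring.
  - replace (Z.to_nat z) with (S (Z.to_nat (z - 1))) by lia.
    set (m := Z.to_nat (z - 1)).
    rewrite (rsum_ext _ (fun j => rbinom g j * (s (z - Z.of_nat j)%Z - s (z - Z.of_nat j - 1)%Z))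
      (fun j => rbinom g j * s (z - Z.of_nat j)%Z - rbinom g j * s (z - 1 - Z.of_nat j)%Z))
      by (intros k _; replace (z - Z.of_nat k - 1)%Z with (z - 1 - Z.of_nat k)%Z by lia; ring).
    rewrite rsum_minus, (rsum_succ m (fun k => rbinom g k * s (z - 1 - Z.of_nat k)%Z)).
    replace (z - 1 - Z.of_nat m)%Z with 0%Z by (unfold m; lia). ring.
Qed.

Lemma zdiffN_zsum (g : R) (q : nat) (s : Z -> R) (z : Z) :
  zdiffN q (zsum g s) z = zsum g (zdiffN q s) z
    + rsum q (fun k => rbinomZ (g - INR q + INR k + 1) (z - 1) * zdiffN k s 0%Z).
Proof.
  revert z. induction q as [|q IH]; intros z; [simpl; ring|].
  change (zdiffN (S q) (zsum g s) z) with (zdiffN q (zsum g s) z - zdiffN q (zsum g s) (z - 1)%Z).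
  rewrite !IH, rsum_succ.
  pose proof (zdiff_zsum g (zdiffN q s) z) as Hparts. unfold zdiff at 1 in Hparts.
  replace (g - INR (S q) + INR q + 1) with g by (rewrite S_INR; ring).
  rewrite (rsum_ext q (fun k => rbinomZ (g - INR (S q) + INR k + 1) (z - 1) * zdiffN k s 0%Z)
     (fun k => rbinomZ (g - INR q + INR k + 1) (z - 1) * zdiffN k s 0%Z
             - rbinomZ (g - INR q + INR k + 1) (z - 1 - 1) * zdiffN k s 0%Z))
    by (intros k _; rewrite <- Rmult_minus_distr_r, rbinomZ_pascal, S_INR; f_equal; f_equal; ring).
  rewrite rsum_minus. simpl zdiffN. lra.
Qed.

Lemma zdiffN_zsum_commute (g : R) (n p : nat) (s : Z -> R) (z : Z) :
  zdiffN p (zdiffN n (zsum g s)) z =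
  zdiffN n (zsum g (zdiffN p s)) z
  + rsum p (fun k => rbinomZ (g - INR n - INR p + INR k + 1) (z - 1) * zdiffN k s 0%Z).
Proof.
  rewrite zdiffN_add, !zdiffN_zsum, zdiffN_add, rsum_split, (Nat.add_comm p n).
  rewrite (rsum_ext p (fun k => rbinomZ (g - INR (n + p) + INR k + 1) (z - 1) * zdiffN k s 0%Z)
     (fun k => rbinomZ (g - INR n - INR p + INR k + 1) (z - 1) * zdiffN k s 0%Z))
    by (intros k _; rewrite plus_INR; f_equal; f_equal; ring).
  rewrite (rsum_ext n (fun k => rbinomZ (g - INR n + INR k + 1) (z - 1) * zdiffN k (zdiffN p s) 0%Z)
     (fun k => rbinomZ (g - INR (n + p) + INR (p + k) + 1) (z - 1) * zdiffN (p + k) s 0%Z))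
    by (intros k _; rewrite zdiffN_add, Nat.add_comm, !plus_INR; f_equal; f_equal; ring).
  ring.
Qed.

Definition on_lattice (c : R) (u : R -> R) : Z -> R := fun z => u (c - IZR z).

Lemma on_lattice_DeltaN (c : R) (u : R -> R) (m : nat) (z : Z) :
  DeltaN m u (c - IZR z) = (-1) ^ m * zdiffN m (on_lattice c u) z.
Proof.
  revert z. induction m as [|m IH]; intros z; [simpl; unfold on_lattice; ring|].
  change (DeltaN (S m) u (c - IZR z)) with (DeltaN m u (c - IZR z + 1) - DeltaN m u (c - IZR z)).
  replace (c - IZR z + 1) with (c - IZR (z - 1)) by (rewrite minus_IZR; simpl; ring).
  rewrite !IH. simpl zdiffN. unfold zdiff. simpl pow. ring.
Qed.

Lemma neg_one_pow_sq (m : nat) : (-1) ^ m * (-1) ^ m = 1.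
Proof. rewrite <- Rpow_mult_distr. replace (-1 * -1) with 1 by ring. apply pow1. Qed.

Lemma on_lattice_oDelta (c : R) (u : R -> R) (m : nat) :
  on_lattice c (oDelta m u) = zdiffN m (on_lattice c u).
Proof.
  apply functional_extensionality. intros z. unfold on_lattice at 1, oDelta.
  rewrite on_lattice_DeltaN, <- Rmult_assoc, neg_one_pow_sq. ring.
Qed.

Lemma up_IZR (z : Z) : up (IZR z) = (z + 1)%Z.
Proof. symmetry. apply tech_up; rewrite plus_IZR; simpl; lra. Qed.

Lemma on_lattice_nabla_sum (c g : R) (u : R -> R) :
  0 < g -> on_lattice c (nabla_sum c g u) = zsum g (on_lattice c u).
Proof.
  intros Hg. apply functional_extensionality. intros z. unfold on_lattice, nabla_sum, zsum.
  replace (c - (c - IZR z)) with (IZR z) by ring. rewrite up_IZR, Z.add_simpl_r.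
  unfold Gamma at 1. rewrite Rinv_inv, <- rsum_scal. apply rsum_ext. intros j _.
  replace (c - IZR z + INR j - (c - IZR z - 1)) with (INR j + 1) by ring.
  replace (c - IZR z + INR j) with (c - IZR (z - Z.of_nat j)) by (rewrite minus_IZR, <- INR_IZR_INZ; ring).
  rewrite <- (rising_rbinom g j); [ring|].
  pose proof (RGammaInv_pos (g + INR j)) as Hpos. pose proof (pos_INR j). lra.
Qed.

Lemma on_lattice_nabla_diff (c beta : R) (u : R -> R) :
  let n := Z.to_nat (gis beta + 1) in
  on_lattice c (nabla_diff c beta u) =
  zdiffN n (on_lattice c (if Req_dec_T (INR n - beta) 0 then u else nabla_sum c (INR n - beta) u)).
Proof.
  intros n. apply functional_extensionality. intros z. unfold on_lattice at 1, nabla_diff. fold n.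
  rewrite on_lattice_DeltaN, <- Rmult_assoc, neg_one_pow_sq. ring.
Qed.

Lemma gis_succ_bounds (beta : R) : 0 < beta -> beta <= INR (Z.to_nat (gis beta + 1)) < beta + 1.
Proof.
  intros Hb. unfold gis. destruct (archimed (- beta)) as [Hup1 Hup2].
  assert (Hu : (up (- beta) <= 0)%Z) by (apply Z.lt_succ_r, lt_IZR; simpl; lra).
  rewrite INR_IZR_INZ, Z2Nat.id by lia. rewrite plus_IZR, opp_IZR. simpl. lra.
Qed.

Lemma nabla_op_on_lattice (c alpha : R) :
  (exists n : nat, alpha = - INR n /\
     forall u, on_lattice c (nabla_op c alpha u) = zdiffN n (on_lattice c u)) \/
  (exists (n : nat) (g : R), 0 < g /\ alpha = g - INR n /\ (forall m : nat, alpha <> - INR m) /\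
     forall u, on_lattice c (nabla_op c alpha u) = zdiffN n (zsum g (on_lattice c u))).
Proof.
  unfold nabla_op. destruct (Rlt_dec 0 alpha) as [Hpos|Hnpos].
  { right. exists 0%nat, alpha. repeat split; [lra | simpl; ring | |].
    - intros m Hm. pose proof (pos_INR m). lra.
    - intros u. apply on_lattice_nabla_sum, Hpos. }
  destruct (Req_dec_T alpha 0) as [H0|H0].
  { left. exists 0%nat. split; [simpl; lra | reflexivity]. }
  pose proof (gis_succ_bounds (- alpha) ltac:(lra)) as Hbounds.
  pose proof (on_lattice_nabla_diff c (- alpha)) as Hdiff. cbv zeta in Hdiff.
  set (n := Z.to_nat (gis (- alpha) + 1)) in *.
  destruct (Req_dec_T (INR n - - alpha) 0) as [E|E].
  - left. exists n. split; [lra | exact Hdiff].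
  - right. exists n, (INR n - - alpha). repeat split; [lra | ring | |].
    + intros m Hm. rewrite Hm in Hbounds, E.
      assert (Hmn : (m <= n)%nat) by (apply INR_le; lra).
      assert (Hnm : (n < S m)%nat) by (apply INR_lt; rewrite S_INR; lra).
      replace n with m in E by lia. lra.
    + intros u. rewrite Hdiff. f_equal. apply on_lattice_nabla_sum. lra.
Qed.

(** At a pole of Gamma the convention 1/Gamma = 0 kills any boundary weight. *)
Lemma div_Gamma_pole (r e : R) (m : nat) : e = - INR m -> r / Gamma e = 0.
Proof. intros He. unfold Rdiv, Gamma. rewrite He, RGammaInv_neg_int, !Rinv_0. ring. Qed.

Lemma boundary_weight_rbinom (a : R) (z : Z) :
  (0 < z)%Z -> RGammaInv (a + IZR z - 1) <> 0 ->
  rising (IZR z) (a - 1) / Gamma a = rbinomZ a (z - 1).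
Proof.
  intros Hz Hnz. unfold rbinomZ. destruct (Z_lt_dec (z - 1) 0) as [Hlt|_]; [lia|].
  assert (Hj : IZR z = INR (Z.to_nat (z - 1)) + 1).
  { rewrite INR_IZR_INZ, Z2Nat.id, minus_IZR by lia. simpl. ring. }
  rewrite <- rising_rbinom.
  - rewrite <- Hj. unfold Gamma, Rdiv. rewrite Rinv_inv. reflexivity.
  - replace (a + INR (Z.to_nat (z - 1))) with (a + IZR z - 1) by lra. exact Hnz.
Qed.

Theorem theorem2p12 (alpha : R) (p : nat) (b : R) (f : R -> R)
  (hp : (0 < p)%nat) :
  forall t : R, inN (b - 2 * INR p + 1) t ->
    nabla_op (b - INR p + 1) alpha (oDelta p f) t =
    oDelta p (nabla_op (b - INR p + 1) alpha f) t
    - rsum p (fun k =>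
        rising (b - INR p + 1 - t) (alpha - INR p + INR k)
        / Gamma (alpha + INR k - INR p + 1)
        * oDelta k f (b - INR p + 1)).
Proof.
  intros t [n0 Ht]. set (c := b - INR p + 1). set (z := Z.of_nat (p + n0)).
  assert (Hz : (0 < z)%Z) by (unfold z; lia).
  assert (Ht' : t = c - IZR z) by (unfold z, c; rewrite <- INR_IZR_INZ, plus_INR; lra).
  replace (c - t) with (IZR z) by lra. rewrite Ht'. clear Ht Ht'.
  set (G := on_lattice c f).
  assert (Hend : forall k, oDelta k f c = zdiffN k G 0%Z).
  { intros k. unfold G. rewrite <- on_lattice_oDelta. unfold on_lattice. f_equal. simpl. ring. }
  change (nabla_op c alpha (oDelta p f) (c - IZR z)) with (on_lattice c (nabla_op c alpha (oDelta p f)) z).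
  change (oDelta p (nabla_op c alpha f) (c - IZR z)) with (on_lattice c (oDelta p (nabla_op c alpha f)) z).
  destruct (nabla_op_on_lattice c alpha) as [[n [Hn Hop]] | [n [g [Hg [Hn [Hpole Hop]]]]]];
    rewrite on_lattice_oDelta, !Hop, on_lattice_oDelta; fold G.
  - (* alpha = -n: differences commute and every boundary weight sits at a pole of Gamma *)
    rewrite rsum_zero; [rewrite !zdiffN_add, (Nat.add_comm n p); ring|].
    intros k Hk. rewrite (div_Gamma_pole _ _ (n + p - 1 - k)); [ring|].
    rewrite Hn, !minus_INR, plus_INR by lia. simpl. ring.
  - (* alpha = g - n off the poles: the boundary terms of the commutation formula *)
    rewrite zdiffN_zsum_commute.
    rewrite (rsum_ext p (fun k => rising (IZR z) (alpha - INR p + INR k)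
                                   / Gamma (alpha + INR k - INR p + 1) * oDelta k f c)
                        (fun k => rbinomZ (g - INR n - INR p + INR k + 1) (z - 1) * zdiffN k G 0%Z)); [ring|].
    intros k _. rewrite Hend. f_equal.
    replace (alpha - INR p + INR k) with ((g - INR n - INR p + INR k + 1) - 1) by lra.
    replace (alpha + INR k - INR p + 1) with (g - INR n - INR p + INR k + 1) by lra.
    apply boundary_weight_rbinom; [exact Hz|].
    apply RGammaInv_neq0. intros m Hm. apply (Hpole (m + k + n0)%nat).
    unfold z in Hm. rewrite <- INR_IZR_INZ, !plus_INR in Hm. rewrite !plus_INR. lra.
Qed.
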